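(* Let $\langle A, \leq, \otimes, \ominus, \mathbf{1}\rangle$ be a residuated partially ordered monoid with bottom element $\bot$. Then for every $k\geq1$, $\langle Lex_k(A), \leq_k, \otimes^k, \ominus_k, \mathbf{1}^k\rangle$ is a residuated partially ordered monoid, where for $a=a_1\ldots a_k$, $b=b_1\ldots b_k\in Lex_k(A)$: $$a \ominus_k b = \begin{cases} (a_1 \ominus b_1) \ldots (a_k \ominus b_k) & \text{if } k+1 = \gamma(a,b) = \delta(a,b),\\ (a_1 \ominus b_1) \ldots (a_{\gamma(a,b)} \ominus b_{\gamma(a,b)})\,\bot^{k-\gamma(a,b)} & \text{if } k+1 \neq \gamma(a,b) \leq \delta(a,b),\\ (a_1 \ominus b_1) \ldots (a_{\delta(a,b)} \ominus b_{\delta(a,b)})\,\big(\bigvee Lex_{k-\delta(a,b)}(A)\big) & \text{otherwise.}\end{cases}$$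
   Context: A residuated partially ordered monoid $\langle A, \leq, \otimes, \ominus, \mathbf{1}\rangle$ consists of a partial order $\langle A,\leq\rangle$, a commutative monoid $\langle A,\otimes,\mathbf{1}\rangle$, and a binary operation $\ominus$ with $b \otimes c \leq a$ iff $c \leq a \ominus b$ for all $a,b,c\in A$. $a<b$ means $a\leq b$, $a\neq b$. $I(A) = \{c \in A \mid \forall a,b \in A.\ a \otimes c = b \otimes c \Rightarrow a = b\}$, $C(A)=A\setminus I(A)$. $Lex_k(A)\subseteq A^k$: $Lex_1(A) = A$, $Lex_{k+1}(A) = I(A)\, Lex_k(A) \cup C(A)\{\bot\}^k$ (concatenations of sequences; $\{\bot\}^k$ the singleton of $k$ copies of $\bot$). The order $\leq_k$: $\leq_1=\leq$, and for $k\geq2$, $a_1 \ldots a_k \leq_k b_1 \ldots b_k$ iff $a_1 < b_1$, or $a_1 = b_1$ and $a_2 \ldots a_k \leq_{k-1} b_2 \ldots b_k$. $\otimes^k$ is componentwise, $\mathbf{1}^k=\mathbf{1}\ldots\mathbf{1}$; $\bot^n$ is the sequence of $n$ copies of $\bot$; $\bigvee Lex_n(A)$ denotes the greatest element of $Lex_n(A)$ w.r.t. $\leq_n$ (the empty sequence when $n=0$). For $a,b\in Lex_k(A)$: $\gamma(a,b) = \min\{ i \mid a_i \ominus b_i \in C(A)\}$ and $\delta(a,b) = \min\{ i \mid (a_i \ominus b_i) \otimes b_i < a_i\}$, each equal to $k+1$ if the set is empty. *)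

(* an abstract carrier A with Prop-valued order; classical logic
   is used to decide the (non-decidable) case conditions. Sequences = lists,
   positions are 1-based as in the paper. *)
From Stdlib Require Import List Arith Classical ClassicalEpsilon.
Import ListNotations.

Definition residuated_pomonoid {X : Type} (P : X -> Prop) (le : X -> X -> Prop)
  (mul sub : X -> X -> X) (one : X) : Prop :=
  P one /\
  (forall a b, P a -> P b -> P (mul a b)) /\
  (forall a b, P a -> P b -> P (sub a b)) /\
  (forall a, P a -> le a a) /\
  (forall a b, P a -> P b -> le a b -> le b a -> a = b) /\
  (forall a b c, P a -> P b -> P c -> le a b -> le b c -> le a c) /\
  (forall a b c, P a -> P b -> P c -> mul a (mul b c) = mul (mul a b) c) /\
  (forall a b, P a -> P b -> mul a b = mul b a) /\
  (forall a, P a -> mul one a = a) /\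
  (forall a b c, P a -> P b -> P c -> (le (mul b c) a <-> le c (sub a b))).

Section Lex.
Context {A : Type} (le : A -> A -> Prop) (mul sub : A -> A -> A) (bot : A).

Definition lt (a b : A) : Prop := le a b /\ a <> b.

Definition Icanc (c : A) : Prop := forall a b, mul a c = mul b c -> a = b.
Definition Cnon (c : A) : Prop := ~ Icanc c.

(* Lex_n(A) as a predicate on lists; Lex_0 = {empty sequence} (convention). *)
Fixpoint Lex (n : nat) (s : list A) : Prop :=
  match n with
  | 0 => s = []
  | S n' =>
    match n' with
    | 0 => exists a, s = [a]
    | S _ => exists a t, s = a :: t /\
               ((Icanc a /\ Lex n' t) \/ (Cnon a /\ t = repeat bot n'))
    end
  end.

Fixpoint lexle (n : nat) (s t : list A) : Prop :=
  match n with
  | 0 => True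
  | S n' =>
    match s, t with
    | a :: s', b :: t' =>
      match n' with
      | 0 => le a b
      | S _ => lt a b \/ (a = b /\ lexle n' s' t')
      end
    | _, _ => False
    end
  end.

Fixpoint lmul (s t : list A) : list A :=
  match s, t with
  | a :: s', b :: t' => mul a b :: lmul s' t'
  | _, _ => []
  end.

Fixpoint lsub (s t : list A) : list A :=
  match s, t with
  | a :: s', b :: t' => sub a b :: lsub s' t'
  | _, _ => []
  end.

Definition lone (one : A) (n : nat) : list A := repeat one n.

(* gamma(a,b) = min { i | a_i - b_i in C(A) }, k+1 if empty *)
Fixpoint gamma (s t : list A) : nat :=
  match s, t with
  | a :: s', b :: t' =>
    if excluded_middle_informative (Cnon (sub a b)) then 1 else S (gamma s' t')
  | _, _ => 1
  end.

(* delta(a,b) = min { i | (a_i - b_i) * b_i < a_i }, k+1 if empty *)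
Fixpoint delta (s t : list A) : nat :=
  match s, t with
  | a :: s', b :: t' =>
    if excluded_middle_informative (lt (mul (sub a b) b) a) then 1
    else S (delta s' t')
  | _, _ => 1
  end.

Definition is_greatest (n : nat) (g : list A) : Prop :=
  Lex n g /\ forall s, Lex n s -> lexle n s g.

Definition bigvee (n : nat) : list A :=
  match n with
  | 0 => []
  | S _ => epsilon (inhabits []) (is_greatest n)
  end.

Definition lexsub (k : nat) (s t : list A) : list A :=
  let g := gamma s t in
  let d := delta s t in
  if andb (Nat.eqb (k + 1) g) (Nat.eqb (k + 1) d) then lsub s t
  else if andb (negb (Nat.eqb (k + 1) g)) (Nat.leb g d) then
    firstn g (lsub s t) ++ repeat bot (k - g)
  else firstn d (lsub s t) ++ bigvee (k - d).

End Lex.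

(* Everything goes by induction on k, peeling off the first coordinate.
   Comparing lexicographically, b c <=_k a holds iff b1 c1 <= a1 and, when
   b1 c1 = a1, the tails compare; by residuation the head condition is
   c1 <= x with x = a1 - b1. Three cases follow the definition of the
   residual. If x is not cancellative, c1 = x forces the tail of c to be
   bottoms, and b1 c1 = a1 with b1 cancellative forces c1 = x, so the tails
   never matter. If b1 x < a1, then b1 c1 <= b1 x < a1, so the tails are never
   compared and the residual may continue with the top of Lex_(k-1). If
   b1 x = a1, then b1 c1 = a1 iff c1 = x (for b1 cancellative; otherwise the
   tail of b is bottoms), and the tails are handled by induction. *)

From Stdlib Require Import List Arith Classical ClassicalEpsilon.
Import ListNotations.

Section ResidualUnfolding.
Context {A : Type} (le : A -> A -> Prop) (mul sub : A -> A -> A) (bot : A).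

Lemma gamma_succ s t : exists g, gamma mul sub s t = S g.
Proof.
  destruct s, t; simpl; eauto.
  destruct (excluded_middle_informative _); eauto.
Qed.

Lemma lexsub_cons_noncancellative k a b s t :
  Cnon mul (sub a b) ->
  lexsub le mul sub bot (S k) (a :: s) (b :: t) = sub a b :: repeat bot k.
Proof.
  intros C; unfold lexsub; cbn [gamma delta].
  destruct (excluded_middle_informative (Cnon mul (sub a b))); [|contradiction].
  rewrite Nat.add_1_r.
  destruct (excluded_middle_informative _); simpl; rewrite Nat.sub_0_r; reflexivity.
Qed.

Lemma lexsub_cons_strict k a b s t :
  ~ Cnon mul (sub a b) -> lt le (mul (sub a b) b) a ->
  lexsub le mul sub bot (S k) (a :: s) (b :: t) = sub a b :: bigvee le mul bot k.
Proof.
  intros I D; unfold lexsub; cbn [gamma delta].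
  destruct (excluded_middle_informative (Cnon mul (sub a b))); [contradiction|].
  destruct (excluded_middle_informative _); [|contradiction].
  rewrite Nat.add_1_r; destruct (gamma_succ s t) as [g ->].
  simpl; rewrite Nat.sub_0_r, !Bool.andb_false_r; reflexivity.
Qed.

Lemma lexsub_cons_exact k a b s t :
  ~ Cnon mul (sub a b) -> ~ lt le (mul (sub a b) b) a ->
  lexsub le mul sub bot (S k) (a :: s) (b :: t)
  = sub a b :: lexsub le mul sub bot k s t.
Proof.
  intros I D; unfold lexsub; cbn [gamma delta].
  destruct (excluded_middle_informative (Cnon mul (sub a b))); [contradiction|].
  destruct (excluded_middle_informative _); [contradiction|].
  cbn [Nat.eqb Nat.add Nat.leb firstn app Nat.sub lsub].
  destruct (k + 1 =? _), (k + 1 =? _), (_ <=? _); reflexivity.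
Qed.

End ResidualUnfolding.

Section LexSequences.
Context {A : Type} {mul : A -> A -> A} {bot : A}.

Lemma Lex_repeat_bot n : Lex mul bot n (repeat bot n).
Proof.
  induction n as [|[|n] IH]; simpl; eauto.
  exists bot, (bot :: repeat bot n); split; auto.
  destruct (classic (Icanc mul bot)); [left|right]; auto.
Qed.

Lemma Lex_cons n a t :
  Lex mul bot (S n) (a :: t) <-> Lex mul bot n t /\ (Cnon mul a -> t = repeat bot n).
Proof.
  destruct n as [|n]; simpl.
  - split; [intros [x E]; injection E as _ ->|intros [-> _]]; eauto.
  - split.
    + intros (a0 & t0 & E & [[I Ht]|[C ->]]); injection E as -> ->.
      * split; [exact Ht|contradiction].
      * split; [apply (Lex_repeat_bot (S n))|reflexivity].
    + intros [Ht Hbot]; exists a, t; split; [reflexivity|].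
      destruct (classic (Icanc mul a)); [left|right]; auto.
Qed.

Lemma Lex_S_inv {n s} :
  Lex mul bot (S n) s ->
  exists a t, s = a :: t /\ Lex mul bot n t /\ (Cnon mul a -> t = repeat bot n).
Proof.
  destruct s as [|a t].
  - destruct n as [|[|n]]; simpl; firstorder discriminate.
  - intros H; apply Lex_cons in H; eauto.
Qed.

Lemma Lex_length {n s} : Lex mul bot n s -> length s = n.
Proof.
  revert s; induction n as [|n IH]; intros s H.
  - simpl in H; subst; reflexivity.
  - destruct (Lex_S_inv H) as (a & t & -> & Ht & _); simpl; auto.
Qed.

End LexSequences.

Section LexOrder.
Context {A : Type} {le : A -> A -> Prop}.
Hypothesis le_refl : forall a, le a a.
Hypothesis le_antisym : forall a b, le a b -> le b a -> a = b.
Hypothesis le_trans : forall a b c, le a b -> le b c -> le a c.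

Lemma lexle_cons_iff n a s b t :
  lexle le (S n) (a :: s) (b :: t) <-> le a b /\ (a = b -> lexle le n s t).
Proof.
  destruct n as [|n]; [simpl; tauto|].
  change (lexle le (S (S n)) (a :: s) (b :: t))
    with (lt le a b \/ (a = b /\ lexle le (S n) s t)).
  unfold lt; split.
  - intros [[Hab Hne]|[-> Hst]]; split; auto; intros E; contradiction.
  - intros [Hab Hst]; destruct (classic (a = b)); [right|left]; auto.
Qed.

Lemma lexle_refl n s : length s = n -> lexle le n s s.
Proof.
  revert s; induction n as [|n IH]; intros [|a s] H; try discriminate; simpl; auto.
  apply lexle_cons_iff; auto.
Qed.

Lemma lexle_antisym n s t : length s = n -> length t = n ->
  lexle le n s t -> lexle le n t s -> s = t.
Proof.
  revert s t; induction n as [|n IH]; intros [|a s] [|b t] Hs Ht; try discriminate;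
    auto; rewrite !lexle_cons_iff.
  intros [Hab Hst] [Hba Hts].
  assert (a = b) as <- by auto.
  f_equal; auto.
Qed.

Lemma lexle_trans n s t u : length s = n -> length t = n -> length u = n ->
  lexle le n s t -> lexle le n t u -> lexle le n s u.
Proof.
  revert s t u; induction n as [|n IH]; intros [|a s] [|b t] [|c u] Hs Ht Hu;
    try discriminate; auto; rewrite !lexle_cons_iff.
  intros [Hab Hst] [Hbc Htu]; split; [eauto|intros <-].
  assert (a = b) as <- by eauto.
  apply IH with t; auto.
Qed.

Lemma lexle_repeat_bot {bot} (bot_least : forall a, le bot a) n s :
  length s = n -> lexle le n (repeat bot n) s.
Proof.
  revert s; induction n as [|n IH]; intros [|a s] H; try discriminate; simpl; auto.
  apply lexle_cons_iff; auto.
Qed.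

Section Top.
Context {mul : A -> A -> A} {bot : A}.
Variable top : A.
Hypothesis le_top : forall a, le a top.

Lemma Lex_greatest_exists n : exists g, is_greatest le mul bot n g.
Proof.
  induction n as [|n [g [Hg Hgreat]]].
  - exists []; split; [reflexivity|intros; exact I].
  - destruct (classic (Icanc mul top)) as [I|C].
    + exists (top :: g); split.
      * apply Lex_cons; split; [exact Hg|contradiction].
      * intros s Hs; destruct (Lex_S_inv Hs) as (a & t & -> & Ht & _).
        apply lexle_cons_iff; split; auto.
    + exists (top :: repeat bot n); split.
      * apply Lex_cons; split; [apply Lex_repeat_bot|reflexivity].
      * intros s Hs; destruct (Lex_S_inv Hs) as (a & t & -> & Ht & Hbot).
        apply lexle_cons_iff; split; [auto|intros ->].
        rewrite (Hbot C); apply lexle_refl, repeat_length.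
Qed.

Lemma bigvee_greatest n : is_greatest le mul bot n (bigvee le mul bot n).
Proof.
  destruct n; simpl.
  - split; [reflexivity|intros; exact I].
  - apply epsilon_spec, Lex_greatest_exists.
Qed.

End Top.
End LexOrder.

Section PointwiseProduct.
Context {A : Type} (mul : A -> A -> A) (one bot : A).
Hypothesis mul_assoc : forall a b c, mul a (mul b c) = mul (mul a b) c.
Hypothesis mul_comm : forall a b, mul a b = mul b a.
Hypothesis one_mul : forall a, mul one a = a.
Hypothesis bot_mul : forall a, mul bot a = bot.

Lemma lmul_comm s t : lmul mul s t = lmul mul t s.
Proof.
  revert t; induction s; intros [|b t]; simpl; f_equal; auto.
Qed.

Lemma lmul_assoc s t u : lmul mul s (lmul mul t u) = lmul mul (lmul mul s t) u.
Proof.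
  revert t u; induction s; intros [|b t] [|c u]; simpl; f_equal; auto.
Qed.

Lemma lmul_repeat_one_l n s : length s = n -> lmul mul (repeat one n) s = s.
Proof.
  revert s; induction n; intros [|b t] H; simpl in *; try discriminate; f_equal; auto.
Qed.

Lemma lmul_repeat_bot_l n s : length s = n -> lmul mul (repeat bot n) s = repeat bot n.
Proof.
  revert s; induction n; intros [|b t] H; simpl in *; try discriminate; f_equal; auto.
Qed.

Lemma Icanc_mul {a b} : Icanc mul a -> Icanc mul b -> Icanc mul (mul a b).
Proof. intros Ha Hb u v E; apply Ha, Hb; rewrite <- !mul_assoc; exact E. Qed.

Lemma Icanc_one : Icanc mul one.
Proof. intros u v E; rewrite !(mul_comm _ one), !one_mul in E; exact E. Qed.

Lemma Lex_repeat_one n : Lex mul bot n (repeat one n).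
Proof.
  induction n; simpl; [reflexivity|].
  apply Lex_cons; split; [assumption|].
  intros C; contradiction (C Icanc_one).
Qed.

Lemma Lex_lmul n s t :
  Lex mul bot n s -> Lex mul bot n t -> Lex mul bot n (lmul mul s t).
Proof.
  revert s t; induction n as [|n IH]; intros s t Hs Ht.
  - simpl in *; subst; reflexivity.
  - destruct (Lex_S_inv Hs) as (a & s' & -> & Hs' & Ha).
    destruct (Lex_S_inv Ht) as (b & t' & -> & Ht' & Hb).
    apply Lex_cons; split; [auto|intros C].
    destruct (classic (Icanc mul a)) as [Ia|Ca].
    + destruct (classic (Icanc mul b)) as [Ib|Cb].
      * contradiction (C (Icanc_mul Ia Ib)).
      * rewrite (Hb Cb), lmul_comm; apply lmul_repeat_bot_l, (Lex_length Hs').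
    + rewrite (Ha Ca); apply lmul_repeat_bot_l, (Lex_length Ht').
Qed.

End PointwiseProduct.

Section Residuation.
Context {A : Type} {le : A -> A -> Prop} {mul sub : A -> A -> A} {bot : A}.
Hypothesis le_refl : forall a, le a a.
Hypothesis le_antisym : forall a b, le a b -> le b a -> a = b.
Hypothesis le_trans : forall a b c, le a b -> le b c -> le a c.
Hypothesis mul_comm : forall a b, mul a b = mul b a.
Hypothesis residuation : forall a b c, le (mul b c) a <-> le c (sub a b).
Hypothesis bot_least : forall a, le bot a.

Lemma mul_residual_le a b : le (mul b (sub a b)) a.
Proof. apply residuation, le_refl. Qed.

Lemma mul_le_mono_l a b c : le a b -> le (mul c a) (mul c b).
Proof.
  intros Hab; apply residuation.
  apply le_trans with b; [exact Hab|apply residuation, le_refl].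
Qed.

Lemma bot_mul a : mul bot a = bot.
Proof.
  rewrite mul_comm; apply le_antisym; [|apply bot_least].
  apply residuation, bot_least.
Qed.

Lemma le_sub_bot_bot a : le a (sub bot bot).
Proof. apply residuation; rewrite bot_mul; apply le_refl. Qed.

Lemma Icanc_residual_eq {a b c} :
  Icanc mul b -> mul b c = a -> le c (sub a b) -> c = sub a b.
Proof.
  intros Ib E Hc; apply Ib; rewrite !(mul_comm _ b).
  apply le_antisym; [now apply mul_le_mono_l|].
  rewrite E; apply mul_residual_le.
Qed.

Lemma residual_strict_ne {a b c} :
  lt le (mul (sub a b) b) a -> le c (sub a b) -> mul b c <> a.
Proof.
  intros [Hle Hne] Hc E; apply Hne, le_antisym; [exact Hle|].
  rewrite (mul_comm _ b), <- E at 1; now apply mul_le_mono_l.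
Qed.

Lemma residual_exact {a b} : ~ lt le (mul (sub a b) b) a -> mul b (sub a b) = a.
Proof.
  intros D; destruct (classic (mul b (sub a b) = a)) as [E|E]; [exact E|].
  contradiction D; split; rewrite mul_comm; [apply mul_residual_le|exact E].
Qed.

Lemma Lex_lexsub k s t :
  Lex mul bot k s -> Lex mul bot k t -> Lex mul bot k (lexsub le mul sub bot k s t).
Proof.
  revert s t; induction k as [|k IH]; intros s t Hs Ht.
  - simpl in *; subst; reflexivity.
  - destruct (Lex_S_inv Hs) as (a & s' & -> & Hs' & _).
    destruct (Lex_S_inv Ht) as (b & t' & -> & Ht' & _).
    destruct (classic (Cnon mul (sub a b))) as [C|I];
      [|destruct (classic (lt le (mul (sub a b) b) a)) as [D|D]].
    + rewrite lexsub_cons_noncancellative by exact C.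
      apply Lex_cons; split; [apply Lex_repeat_bot|reflexivity].
    + rewrite lexsub_cons_strict by assumption.
      apply Lex_cons; split; [|contradiction].
      apply (bigvee_greatest le_refl (sub bot bot) le_sub_bot_bot).
    + rewrite lexsub_cons_exact by assumption.
      apply Lex_cons; split; [auto|contradiction].
Qed.
Lemma lexle_residuation k a b c :
  Lex mul bot k a -> Lex mul bot k b -> Lex mul bot k c ->
  lexle le k (lmul mul b c) a <-> lexle le k c (lexsub le mul sub bot k a b).
Proof.
  revert a b c; induction k as [|k IH]; intros a b c Ha Hb Hc; [simpl; tauto|].
  destruct (Lex_S_inv Ha) as (a1 & a' & -> & Ha' & _).
  destruct (Lex_S_inv Hb) as (b1 & b' & -> & Hb' & Hb1).
  destruct (Lex_S_inv Hc) as (c1 & c' & -> & Hc' & Hc1).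
  pose proof (Lex_length Ha') as La; pose proof (Lex_length Hc') as Lc.
  assert (tail_b : Cnon mul b1 -> lexle le k (lmul mul b' c') a').
  { intros C; rewrite (Hb1 C), lmul_repeat_bot_l by (exact bot_mul || exact Lc).
    now apply lexle_repeat_bot. }
  assert (tail_c : Cnon mul c1 -> lexle le k (lmul mul b' c') a').
  { intros C; rewrite (Hc1 C), lmul_comm, lmul_repeat_bot_l
      by (exact mul_comm || exact bot_mul || apply (Lex_length Hb')).
    now apply lexle_repeat_bot. }
  cbn [lmul]; rewrite lexle_cons_iff, residuation by exact le_refl.
  set (x := sub a1 b1) in *.
  destruct (classic (Cnon mul x)) as [Cx|Ix];
    [|destruct (classic (lt le (mul x b1) a1)) as [Dx|Dx]].
  - rewrite lexsub_cons_noncancellative, lexle_cons_iff by assumption.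
    split; intros [Hle _]; split; auto; intros E.
    + rewrite (Hc1 ltac:(rewrite E; exact Cx)); apply (lexle_refl le_refl), repeat_length.
    + destruct (classic (Icanc mul b1)) as [Ib|Cb]; [|now apply tail_b].
      apply tail_c; now rewrite (Icanc_residual_eq Ib E Hle).
  - rewrite lexsub_cons_strict, lexle_cons_iff by assumption.
    split; intros [Hle _]; split; auto; intros E.
    + now apply (bigvee_greatest le_refl (sub bot bot) le_sub_bot_bot).
    + contradiction (residual_strict_ne Dx Hle E).
  - rewrite lexsub_cons_exact, lexle_cons_iff, <- IH by assumption.
    pose proof (residual_exact Dx) as Ex.
    split; intros [Hle Ht]; split; auto; intros E.
    + apply Ht; rewrite E; exact Ex.
    + destruct (classic (Icanc mul b1)) as [Ib|Cb]; [|now apply tail_b].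
      apply Ht, (Icanc_residual_eq Ib E Hle).
Qed.

End Residuation.

Theorem theorem2 (A : Type) (le : A -> A -> Prop) (mul sub : A -> A -> A)
  (one bot : A)
  (HA : residuated_pomonoid (fun _ : A => True) le mul sub one)
  (Hbot : forall a : A, le bot a)
  (k : nat) (hk : 1 <= k) :
  residuated_pomonoid (Lex mul bot k) (lexle le k) (lmul mul)
    (lexsub le mul sub bot k) (lone one k).
Proof.
  destruct HA as (_ & _ & _ & refl & antisym & trans & assoc & comm & one_l & res).
  assert (le_refl : forall a, le a a) by auto.
  assert (le_antisym : forall a b, le a b -> le b a -> a = b) by auto.
  assert (le_trans : forall a b c, le a b -> le b c -> le a c) by eauto.
  assert (mul_comm : forall a b, mul a b = mul b a) by auto.
  assert (residuation : forall a b c, le (mul b c) a <-> le c (sub a b)) by auto.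
  pose proof (bot_mul le_antisym mul_comm residuation Hbot) as bot_absorbing.
  unfold residuated_pomonoid, lone; repeat split; intros.
  - apply Lex_repeat_one; auto.
  - apply Lex_lmul; auto.
  - apply Lex_lexsub; auto.
  - apply lexle_refl; auto; eapply Lex_length; eauto.
  - apply (lexle_antisym le_refl le_antisym) with k; auto; eapply Lex_length; eauto.
  - apply (lexle_trans le_refl le_antisym le_trans) with b; auto;
      eapply Lex_length; eauto.
  - apply lmul_assoc; auto.
  - apply lmul_comm; auto.
  - apply lmul_repeat_one_l; auto; eapply Lex_length; eauto.
  - now apply (lexle_residuation le_refl le_antisym le_trans mul_comm residuation Hbot).
  - now apply (lexle_residuation le_refl le_antisym le_trans mul_comm residuation Hbot).
Qed.
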